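(* Let $D$ be a vertex-transitive digraph and let $u\in VD$. Then the subdigraph induced by $\mathrm{desc}(u)$ is a tree if and only if the subdigraph induced by $\mathrm{anc}(u)$ is a tree.
   Context: A digraph is a set with an irreflexive antisymmetric arc relation $\to$. $\mathrm{desc}(u)$ is the set of vertices $v$ for which there is a directed path from $u$ to $v$; $\mathrm{anc}(u)$ is the set of vertices $v$ such that $u\in\mathrm{desc}(v)$. A digraph is called a tree if its underlying undirected graph is a tree. Vertex-transitive: the automorphism group acts transitively on vertices. *)

From Stdlib Require Import List Relations.
Import ListNotations.
Set Implicit Arguments.

Section Digraphs.
Variable V : Type.

Record digraph := Digraph {
  arc : V -> V -> Prop;
  arc_irrefl : forall x, ~ arc x x;
  arc_antisym : forall x y, arc x y -> ~ arc y x }.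

Definition automorphism (D : digraph) (f : V -> V) : Prop :=
  (forall x y, f x = f y -> x = y) /\
  (forall y, exists x, f x = y) /\
  (forall x y, arc D x y <-> arc D (f x) (f y)).

Definition vertex_transitive (D : digraph) : Prop :=
  forall x y, exists f, automorphism D f /\ f x = y.

Definition desc (D : digraph) (u : V) : V -> Prop :=
  fun v => clos_refl_trans V (arc D) u v.

Definition anc (D : digraph) (u : V) : V -> Prop :=
  fun v => desc D v u.

Definition uedge (D : digraph) (x y : V) : Prop := arc D x y \/ arc D y x.

Definition induced_uedge (D : digraph) (S : V -> Prop) (x y : V) : Prop :=
  S x /\ S y /\ uedge D x y.

Fixpoint chain (R : V -> V -> Prop) (x : V) (l : list V) : Prop :=
  match l with
  | [] => True
  | y :: l' => R x y /\ chain R y l'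
  end.

Definition induced_connected (D : digraph) (S : V -> Prop) : Prop :=
  forall x y, S x -> S y -> clos_refl_trans V (induced_uedge D S) x y.

Definition induced_has_cycle (D : digraph) (S : V -> Prop) : Prop :=
  exists x l, 2 <= length l /\ NoDup (x :: l) /\
    chain (induced_uedge D S) x l /\ induced_uedge D S (last l x) x.

Definition induced_tree (D : digraph) (S : V -> Prop) : Prop :=
  (exists x, S x) /\ induced_connected D S /\ ~ induced_has_cycle D S.

End Digraphs.

From Stdlib Require Import List Relations Classical Lia FinFun.
Import ListNotations.
Set Implicit Arguments.
Unset Strict Implicit.

(* anc(u) always induces a nonempty connected subdigraph, and reversing every
   arc exchanges desc and anc, so it suffices to show that anc(u) is acyclic
   whenever desc(u) is.  By vertex-transitivity no desc(w) contains a cycle; in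
   particular D has no directed cycle.  If some q in anc(u) had two
   out-neighbours a <> b in anc(u), the paths from a and b to u would close up
   with q into a cycle inside desc(q).  So every vertex of anc(u) has at most
   one out-neighbour in anc(u), which forces every cycle of anc(u) to be a
   directed cycle: impossible. *)

Section Closures.
Variable V : Type.

Lemma clos_rt_map (R R' : V -> V -> Prop) (f : V -> V) :
  (forall a b, R a b -> R' (f a) (f b)) ->
  forall a b, clos_refl_trans V R a b -> clos_refl_trans V R' (f a) (f b).
Proof.
  intros Hf a b; induction 1; [apply rt_step; auto | apply rt_refl | eapply rt_trans; eauto].
Qed.

Lemma clos_rt_mono (R R' : V -> V -> Prop) : (forall a b, R a b -> R' a b) ->
  forall a b, clos_refl_trans V R a b -> clos_refl_trans V R' a b.
Proof. intros H. exact (@clos_rt_map R R' (fun x => x) H). Qed.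

Lemma clos_rt_sym (R : V -> V -> Prop) : (forall a b, R a b -> R b a) ->
  forall a b, clos_refl_trans V R a b -> clos_refl_trans V R b a.
Proof.
  intros H a b; induction 1; [apply rt_step; auto | apply rt_refl | eapply rt_trans; eauto].
Qed.

Lemma clos_rt_transp (R : V -> V -> Prop) a b :
  clos_refl_trans V (fun x y => R y x) a b <-> clos_refl_trans V R b a.
Proof.
  split; induction 1; solve [apply rt_step; auto | apply rt_refl | eapply rt_trans; eauto].
Qed.

End Closures.

Section Chains.
Variable V : Type.

Lemma last_cons (l : list V) y z : last (z :: l) y = last l z.
Proof.
  revert y z; induction l as [|w l IH]; intros y z; [reflexivity|].
  change (last (w :: l) y = last (w :: l) z). rewrite !IH. reflexivity.
Qed.

Lemma last_app (A B : list V) x : last (A ++ B) x = last B (last A x).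
Proof.
  revert x; induction A as [|a A IH]; intros x; [reflexivity|].
  simpl app. rewrite !last_cons. apply IH.
Qed.

Lemma last_map (f : V -> V) l x : last (map f l) (f x) = f (last l x).
Proof.
  revert x; induction l as [|a l IH]; intros x; [reflexivity|].
  simpl map. rewrite !last_cons. apply IH.
Qed.

Lemma in_last (l : list V) x : In (last l x) (x :: l).
Proof.
  revert x; induction l as [|a l IH]; intros x; [left; reflexivity|].
  rewrite last_cons. right. apply IH.
Qed.

Lemma in_hd (l : list V) x : In (hd x l) (x :: l).
Proof. destruct l; simpl; auto. Qed.

Lemma chain_app (R : V -> V -> Prop) A B x :
  chain R x (A ++ B) <-> chain R x A /\ chain R (last A x) B.
Proof.
  revert x; induction A as [|a A IH]; intros x; cbn [app chain].
  - simpl. tauto.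
  - rewrite IH, last_cons. tauto.
Qed.

Lemma chain_prefix (R : V -> V -> Prop) A w B x :
  chain R x (A ++ w :: B) -> chain R x (A ++ [w]).
Proof.
  replace (A ++ w :: B) with ((A ++ [w]) ++ B) by (rewrite <- app_assoc; reflexivity).
  rewrite chain_app. tauto.
Qed.

Lemma chain_map (R R' : V -> V -> Prop) (f : V -> V) : (forall a b, R a b -> R' (f a) (f b)) ->
  forall l x, chain R x l -> chain R' (f x) (map f l).
Proof.
  intros Hf; induction l as [|a l IH]; intros x Hc; simpl in *; [trivial|].
  destruct Hc; split; auto.
Qed.

Lemma chain_mono (R R' : V -> V -> Prop) : (forall a b, R a b -> R' a b) ->
  forall l x, chain R x l -> chain R' x l.
Proof.
  intros H l x Hc. rewrite <- (map_id l). exact (@chain_map R R' (fun x => x) H l x Hc).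
Qed.

Lemma chain_restrict (R : V -> V -> Prop) (S : V -> Prop) l x : chain R x l ->
  (forall z, In z (x :: l) -> S z) -> chain (fun a b => S a /\ S b /\ R a b) x l.
Proof.
  revert x; induction l as [|a l IH]; intros x Hc HS; simpl in *; [trivial|].
  destruct Hc as [Hxa Hc]. split.
  - split; [|split]; [apply HS; auto .. | exact Hxa].
  - apply IH; [exact Hc|]. intros z Hz; apply HS; auto.
Qed.

Lemma chain_rev (R : V -> V -> Prop) L x y :
  chain R x (L ++ [y]) -> chain (fun a b => R b a) y (rev L ++ [x]).
Proof.
  revert x; induction L as [|z L IH]; intros x Hc.
  - simpl in *. tauto.
  - destruct Hc as [Hxz Hc]. simpl rev. apply chain_app.
    split; [exact (IH z Hc)|]. rewrite last_last. simpl; auto.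
Qed.

Lemma chain_of_clos_rt (R : V -> V -> Prop) x y : clos_refl_trans V R x y ->
  exists l, chain R x l /\ last l x = y.
Proof.
  induction 1 as [x y H|x|x y z _ [l1 [H1 E1]] _ [l2 [H2 E2]]].
  - exists [y]; simpl; auto.
  - exists []; simpl; auto.
  - exists (l1 ++ l2). rewrite chain_app, last_app, E1. auto.
Qed.

Lemma clos_rt_of_chain (R : V -> V -> Prop) l x : chain R x l ->
  forall z, In z (x :: l) -> clos_refl_trans V R x z.
Proof.
  revert x; induction l as [|a l IH]; intros x Hc z Hz.
  - destruct Hz as [<-|[]]. apply rt_refl.
  - destruct Hc as [Hxa Hc]. destruct Hz as [<-|Hz]; [apply rt_refl|].
    eapply rt_trans; [apply rt_step; eauto | apply IH; auto].
Qed.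

Lemma chain_nodup (R : V -> V -> Prop) l x : chain R x l ->
  exists l', chain R x l' /\ last l' x = last l x /\ NoDup (x :: l').
Proof.
  revert x; induction l as [|y l IH]; intros x Hc.
  - exists []. repeat split; [constructor; [intros []|constructor]].
  - destruct Hc as [Hxy Hc]. destruct (IH y Hc) as [m [Hm [Em Nm]]].
    destruct (classic (In x (y :: m))) as [Hin|Hin].
    + destruct (in_split _ _ Hin) as [A [B EAB]].
      assert (HxB : chain R x (y :: m)) by (split; auto).
      rewrite EAB in HxB. apply chain_app in HxB as [_ [_ HB]].
      exists B. split; [exact HB|split].
      * rewrite last_cons, <- Em, <- (last_cons m x y), EAB, last_app, last_cons.
        reflexivity.
      * rewrite EAB in Nm. eapply NoDup_app_remove_l; eauto.
    + exists (y :: m). split; [split; auto|split].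
      * rewrite !last_cons. exact Em.
      * constructor; auto.
Qed.

Lemma simple_path_of_clos_rt (R : V -> V -> Prop) x y : clos_refl_trans V R x y ->
  exists l, chain R x l /\ last l x = y /\ NoDup (x :: l).
Proof.
  intros Hxy. destruct (chain_of_clos_rt Hxy) as [l0 [H0 E0]].
  destruct (chain_nodup H0) as [l [Hl [El Nl]]]. exists l. rewrite El. auto.
Qed.

Lemma split_at_first (P : V -> Prop) L : (exists z, In z L /\ P z) ->
  exists A w B, L = A ++ w :: B /\ P w /\ forall t, In t A -> ~ P t.
Proof.
  induction L as [|a L IH]; intros [z [Hz Pz]]; [destruct Hz|].
  destruct (classic (P a)) as [Pa|Pa].
  - exists [], a, L. simpl. auto.
  - destruct Hz as [<-|Hz]; [contradiction|].
    destruct IH as [A [w [B [E [Pw HA]]]]]; [eauto|].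
    exists (a :: A), w, B. rewrite E. split; [reflexivity|split; [exact Pw|]].
    intros t [<-|Ht]; auto.
Qed.

End Chains.

Section Cycles.
Variable V : Type.

Definition cycle (R : V -> V -> Prop) (x : V) (l : list V) : Prop :=
  2 <= length l /\ NoDup (x :: l) /\ chain R x l /\ R (last l x) x.

Lemma cycle_mono (R R' : V -> V -> Prop) x l : (forall a b, R a b -> R' a b) ->
  cycle R x l -> cycle R' x l.
Proof.
  intros H [Hlen [Hnd [Hc Hcl]]]. split; [exact Hlen|split; [exact Hnd|]].
  split; [exact (chain_mono H Hc) | exact (H _ _ Hcl)].
Qed.

Lemma cycle_map (R R' : V -> V -> Prop) (f : V -> V) x l : Injective f ->
  (forall a b, R a b -> R' (f a) (f b)) -> cycle R x l -> cycle R' (f x) (map f l).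
Proof.
  intros Hinj Hf [Hlen [Hnd [Hc Hcl]]]. split; [rewrite length_map; exact Hlen|].
  split; [exact (Injective_map_NoDup Hinj Hnd)|].
  split; [exact (chain_map Hf Hc)|]. rewrite last_map. exact (Hf _ _ Hcl).
Qed.

Lemma cycle_restrict (R : V -> V -> Prop) (S : V -> Prop) x l : cycle R x l ->
  (forall z, In z (x :: l) -> S z) -> cycle (fun a b => S a /\ S b /\ R a b) x l.
Proof.
  intros [Hlen [Hnd [Hc Hcl]]] HS. split; [exact Hlen|split; [exact Hnd|]].
  split; [exact (chain_restrict Hc HS)|].
  split; [apply HS, in_last | split; [apply HS; left; reflexivity | exact Hcl]].
Qed.

Lemma cycle_rev (R : V -> V -> Prop) x m k :
  cycle R x (m ++ [k]) -> cycle (fun a b => R b a) k (rev m ++ [x]).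
Proof.
  intros [Hlen [Hnd [Hc Hcl]]]. rewrite last_last in Hcl.
  split; [rewrite length_app, length_rev; rewrite length_app in Hlen; exact Hlen|].
  split.
  - replace (k :: rev m ++ [x]) with (rev (x :: m ++ [k]))
      by (simpl; rewrite rev_app_distr; reflexivity).
    apply NoDup_rev. exact Hnd.
  - split; [exact (chain_rev Hc)|]. rewrite last_last. exact Hcl.
Qed.

Section Symmetric.
Variable R : V -> V -> Prop.
Hypothesis R_sym : forall a b, R a b -> R b a.

Lemma cycle_of_meeting_paths x A w B C B' :
  chain R x (A ++ w :: B) -> chain R x (C ++ w :: B') ->
  NoDup (x :: A ++ w :: B) -> NoDup (x :: C ++ w :: B') ->
  (forall t, In t A -> ~ In t C) -> A ++ C <> [] ->
  cycle R x (A ++ w :: rev C).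
Proof.
  intros HA HC NA NC Hdisj Hne.
  apply chain_prefix in HA, HC. apply chain_rev, chain_app in HC as [Hrev [Hcl _]].
  assert (NA' : NoDup (x :: A ++ [w])).
  { apply (NoDup_app_remove_r _ B). simpl. rewrite <- app_assoc. exact NA. }
  assert (NC' : NoDup (x :: C ++ [w])).
  { apply (NoDup_app_remove_r _ B'). simpl. rewrite <- app_assoc. exact NC. }
  apply NoDup_cons_iff in NC' as [HxC NC'].
  assert (Eglue : A ++ w :: rev C = (A ++ [w]) ++ rev C)
    by (rewrite <- app_assoc; reflexivity).
  split; [|split; [|split]].
  - rewrite length_app; simpl; rewrite length_rev.
    destruct A, C; simpl; [contradiction Hne; reflexivity | lia ..].
  - rewrite Eglue. change (NoDup ((x :: A ++ [w]) ++ rev C)).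
    apply NoDup_app; [exact NA' | apply NoDup_rev, (NoDup_app_remove_r _ _ NC') |].
    intros t Ht HtC. rewrite <- in_rev in HtC.
    destruct Ht as [<-|Ht]; [apply HxC, in_or_app; left; exact HtC|].
    apply in_app_or in Ht as [Ht|[<-|[]]]; [exact (Hdisj t Ht HtC)|].
    apply (NoDup_remove_2 C [] w NC'). rewrite app_nil_r. exact HtC.
  - rewrite Eglue. apply chain_app. split; [exact HA|].
    rewrite last_last. exact (chain_mono (fun a b H => R_sym H) Hrev).
  - rewrite Eglue, last_app, last_last. apply R_sym. exact Hcl.
Qed.

Lemma cycle_of_two_simple_paths q a la b lb :
  chain R q (a :: la) -> chain R q (b :: lb) ->
  NoDup (q :: a :: la) -> NoDup (q :: b :: lb) -> a <> b -> last la a = last lb b ->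
  exists l, cycle R q l /\ incl l ((a :: la) ++ (b :: lb)).
Proof.
  intros Ha Hb Na Nb Hab Eend.
  destruct (@split_at_first _ (fun t => In t (b :: lb)) (a :: la)) as [A [w [B [E1 [Hw HA]]]]].
  { exists (last la a). split; [apply in_last | rewrite Eend; apply in_last]. }
  destruct (in_split _ _ Hw) as [C [B' E2]].
  exists (A ++ w :: rev C). split.
  - rewrite E1 in Ha, Na. rewrite E2 in Hb, Nb.
    apply (cycle_of_meeting_paths Ha Hb Na Nb).
    + intros t Ht HtC. apply (HA t Ht). rewrite E2. apply in_or_app; left; exact HtC.
    + destruct A, C; [|discriminate ..].
      simpl in E1, E2. injection E1; injection E2; intros; subst; contradiction.
  - intros t Ht. rewrite E1, E2. apply in_app_or in Ht as [Ht|[<-|Ht]]; apply in_or_app.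
    + left. apply in_or_app; left; exact Ht.
    + left. apply in_or_app; right; left; reflexivity.
    + right. apply in_or_app; left. apply in_rev; exact Ht.
Qed.

End Symmetric.

End Cycles.

Section Digraphs.
Variable V : Type.

Lemma uedge_sym (D : digraph V) x y : uedge D x y -> uedge D y x.
Proof. unfold uedge; tauto. Qed.

Lemma induced_uedge_sym (D : digraph V) S x y :
  induced_uedge D S x y -> induced_uedge D S y x.
Proof.
  intros [Sx [Sy Hxy]]. split; [exact Sy | split; [exact Sx | exact (uedge_sym Hxy)]].
Qed.

Lemma induced_cycle (D : digraph V) (S : V -> Prop) x l : cycle (uedge D) x l ->
  (forall z, In z (x :: l) -> S z) -> induced_has_cycle D S.
Proof. intros Hc HS. exists x, l. exact (cycle_restrict Hc HS). Qed.

Lemma directed_cycle_desc (D : digraph V) x l : cycle (arc D) x l ->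
  induced_has_cycle D (desc D x).
Proof.
  intros Hc. apply (induced_cycle (x := x) (l := l)).
  - apply (cycle_mono (R := arc D)); [intros a b Hab; left; exact Hab | exact Hc].
  - destruct Hc as [_ [_ [Hch _]]]. exact (clos_rt_of_chain Hch).
Qed.

Definition induced_outdeg_le1 (D : digraph V) (S : V -> Prop) : Prop :=
  forall q a b, S q -> S a -> S b -> arc D q a -> arc D q b -> a = b.

(* Once a vertex of a simple path sends its arc back to its predecessor p,
   so does every later vertex. *)
Lemma chain_arcs_back (D : digraph V) S : induced_outdeg_le1 D S ->
  forall l y p, chain (induced_uedge D S) y l -> NoDup (y :: l) -> p <> hd y l ->
  S p -> arc D y p -> chain (fun a b => arc D b a) y l.
Proof.
  intros Hout; induction l as [|z l IH]; intros y p Hc Hnd Hp Sp Hyp; [exact I|].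
  destruct Hc as [[Sy [Sz [Hyz|Hzy]]] Hc].
  - exfalso. apply Hp. exact (Hout y p z Sy Sp Sz Hyp Hyz).
  - split; [exact Hzy|]. apply NoDup_cons_iff in Hnd as [Hy Hnd].
    apply (IH z y); [exact Hc | exact Hnd | | exact Sy | exact Hzy].
    intros E. apply Hy. rewrite E. apply in_hd.
Qed.

Lemma cycle_arcs_back (D : digraph V) S x l : induced_outdeg_le1 D S ->
  cycle (induced_uedge D S) x l -> arc D x (last l x) ->
  cycle (fun a b => arc D b a) x l.
Proof.
  intros Hout [Hlen [Hnd [Hc [Sk _]]]] Hx.
  split; [exact Hlen | split; [exact Hnd | split; [|exact Hx]]].
  apply (chain_arcs_back Hout Hc Hnd (p := last l x)); [|exact Sk|exact Hx].
  destruct l as [|a [|b r]]; simpl in Hlen; [lia .. |].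
  simpl hd. rewrite !last_cons. intros E.
  apply NoDup_cons_iff in Hnd as [_ Hnd]. apply NoDup_cons_iff in Hnd as [Ha _].
  apply Ha. rewrite <- E. apply in_last.
Qed.

(* With out-degree at most one, the orientation of the closing edge propagates
   around the whole cycle. *)
Lemma directed_cycle_of_outdeg_le1 (D : digraph V) S x l : induced_outdeg_le1 D S ->
  cycle (induced_uedge D S) x l -> exists y l', cycle (arc D) y l'.
Proof.
  intros Hout Hc.
  destruct (@exists_last _ l) as [m [k ->]].
  { intros ->. destruct Hc as [Hlen _]. simpl in Hlen. lia. }
  pose proof Hc as [_ [_ [_ Hcl]]]. rewrite last_last in Hcl.
  destruct Hcl as [_ [_ [Hkx|Hxk]]].
  - assert (Hr : cycle (induced_uedge D S) k (rev m ++ [x]))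
      by exact (cycle_mono (fun a b H => induced_uedge_sym H) (cycle_rev Hc)).
    apply (cycle_arcs_back Hout) in Hr; [|rewrite last_last; exact Hkx].
    apply cycle_rev in Hr. rewrite rev_involutive in Hr.
    exists x, (m ++ [k]). exact Hr.
  - apply (cycle_arcs_back Hout) in Hc; [|rewrite last_last; exact Hxk].
    exists k, (rev m ++ [x]). exact (cycle_rev Hc).
Qed.

Lemma anc_path_to_root (D : digraph V) u v : anc D u v ->
  clos_refl_trans V (induced_uedge D (anc D u)) v u.
Proof.
  unfold anc, desc. intros Hv. apply clos_rt_rt1n in Hv.
  induction Hv as [v|v y w Hvy Hyw IH]; [apply rt_refl|].
  apply rt_trans with y; [apply rt_step | exact IH].
  split; [|split; [exact (clos_rt1n_rt _ _ _ _ Hyw) | left; exact Hvy]].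
  apply rt_trans with y; [apply rt_step; exact Hvy | exact (clos_rt1n_rt _ _ _ _ Hyw)].
Qed.

Lemma anc_connected (D : digraph V) u : induced_connected D (anc D u).
Proof.
  intros x y Hx Hy. apply rt_trans with u; [exact (anc_path_to_root Hx)|].
  exact (clos_rt_sym (fun a b H => induced_uedge_sym H) (anc_path_to_root Hy)).
Qed.

Lemma desc_cycle_automorphism (D : digraph V) f w : automorphism D f ->
  induced_has_cycle D (desc D w) -> induced_has_cycle D (desc D (f w)).
Proof.
  intros [Hinj [_ Harc]] [x [l Hc]]. exists (f x), (map f l).
  assert (Hf : forall a b, arc D a b -> arc D (f a) (f b)) by (intros a b; apply Harc).
  apply (cycle_map Hinj (R := induced_uedge D (desc D w))); [|exact Hc].
  intros a b [Sa [Sb Hab]].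
  split; [exact (clos_rt_map Hf Sa) | split; [exact (clos_rt_map Hf Sb)|]].
  destruct Hab; [left|right]; apply Hf; assumption.
Qed.

Section AcyclicDescendants.
Variable D : digraph V.
Hypothesis desc_acyclic : forall w, ~ induced_has_cycle D (desc D w).

Lemma no_closed_walk q a : arc D q a -> ~ desc D a q.
Proof.
  intros Hqa Haq. destruct (simple_path_of_clos_rt Haq) as [l [Hl [El Nl]]].
  destruct l as [|t1 [|t2 l]]; [simpl in El; subst a | simpl in El; subst t1 |].
  - exact (arc_irrefl D q Hqa).
  - exact (arc_antisym D a q (proj1 Hl) Hqa).
  - apply (@desc_acyclic a), (directed_cycle_desc (l := t1 :: t2 :: l)).
    split; [simpl; lia | split; [exact Nl | split; [exact Hl | rewrite El; exact Hqa]]].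
Qed.

(* Two out-arcs q -> a, q -> b inside anc(u) give two paths to u which close
   up into a cycle inside desc(q). *)
Lemma anc_outdeg_le1 u : induced_outdeg_le1 D (anc D u).
Proof.
  intros q a b _ Hau Hbu Hqa Hqb. apply NNPP; intros Hab.
  destruct (simple_path_of_clos_rt Hau) as [la [Hla [Ela Nla]]].
  destruct (simple_path_of_clos_rt Hbu) as [lb [Hlb [Elb Nlb]]].
  assert (Pa : chain (arc D) q (a :: la)) by (split; assumption).
  assert (Pb : chain (arc D) q (b :: lb)) by (split; assumption).
  assert (Qa : ~ In q (a :: la))
    by exact (fun Hq => no_closed_walk Hqa (clos_rt_of_chain Hla Hq)).
  assert (Qb : ~ In q (b :: lb))
    by exact (fun Hq => no_closed_walk Hqb (clos_rt_of_chain Hlb Hq)).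
  assert (Harc : forall x y, arc D x y -> uedge D x y) by (intros x y H; left; exact H).
  destruct (cycle_of_two_simple_paths (@uedge_sym D)
              (chain_mono Harc Pa) (chain_mono Harc Pb)
              (NoDup_cons _ Qa Nla) (NoDup_cons _ Qb Nlb) Hab (eq_trans Ela (eq_sym Elb)))
    as [l [Hc Hincl]].
  apply (@desc_acyclic q), (induced_cycle Hc).
  intros z [<-|Hz]; [apply rt_refl|].
  apply Hincl, in_app_or in Hz as [Hz|Hz];
    [exact (clos_rt_of_chain Pa (or_intror Hz)) | exact (clos_rt_of_chain Pb (or_intror Hz))].
Qed.

Lemma anc_acyclic u : ~ induced_has_cycle D (anc D u).
Proof.
  intros [x [l Hc]].
  destruct (directed_cycle_of_outdeg_le1 (@anc_outdeg_le1 u) Hc) as [y [l' Hd]].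
  exact (desc_acyclic (directed_cycle_desc Hd)).
Qed.

End AcyclicDescendants.

Lemma anc_tree_of_desc_tree (D : digraph V) u : vertex_transitive D ->
  induced_tree D (desc D u) -> induced_tree D (anc D u).
Proof.
  intros VT [_ [_ Hacyclic]].
  assert (Hall : forall w, ~ induced_has_cycle D (desc D w)).
  { intros w Hw. destruct (VT w u) as [f [Hf <-]].
    exact (Hacyclic (desc_cycle_automorphism Hf Hw)). }
  split; [exists u; apply rt_refl | split].
  - apply anc_connected.
  - apply anc_acyclic; exact Hall.
Qed.

Definition converse (D : digraph V) : digraph V :=
  @Digraph V (fun x y => arc D y x) (fun x => arc_irrefl D x)
    (fun x y H => arc_antisym D y x H).

Lemma desc_converse (D : digraph V) u v : desc (converse D) u v <-> anc D u v.
Proof. apply clos_rt_transp. Qed.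

Lemma anc_converse (D : digraph V) u v : anc (converse D) u v <-> desc D u v.
Proof. apply clos_rt_transp. Qed.

Lemma uedge_converse (D : digraph V) x y : uedge (converse D) x y <-> uedge D x y.
Proof. unfold uedge; simpl; tauto. Qed.

Lemma vertex_transitive_converse (D : digraph V) :
  vertex_transitive D -> vertex_transitive (converse D).
Proof.
  intros VT x y. destruct (VT x y) as [f [[Hinj [Hsurj Harc]] Hfx]].
  exists f. split; [|exact Hfx].
  split; [exact Hinj | split; [exact Hsurj | intros a b; apply Harc]].
Qed.

Lemma induced_tree_ext (D D' : digraph V) (S S' : V -> Prop) :
  (forall v, S v <-> S' v) -> (forall x y, uedge D x y <-> uedge D' x y) ->
  induced_tree D S -> induced_tree D' S'.
Proof.
  intros HS HU [[x Hx] [Hconn Hacyclic]].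
  assert (Hto : forall a b, induced_uedge D S a b -> induced_uedge D' S' a b)
    by (intros a b [Sa [Sb Hab]];
        split; [|split]; [apply HS | apply HS | apply HU]; assumption).
  assert (Hfrom : forall a b, induced_uedge D' S' a b -> induced_uedge D S a b)
    by (intros a b [Sa [Sb Hab]];
        split; [|split]; [apply HS | apply HS | apply HU]; assumption).
  split; [exists x; apply HS, Hx | split].
  - intros a b Ha Hb. apply (clos_rt_mono Hto), Hconn; apply HS; assumption.
  - intros [y [l Hc]]. apply Hacyclic. exists y, l. exact (cycle_mono Hfrom Hc).
Qed.

End Digraphs.

Theorem lemma3p3 (V : Type) (D : digraph V) (u : V) :
  vertex_transitive D ->
  (induced_tree D (desc D u) <-> induced_tree D (anc D u)).
Proof.
  intros VT. split; [apply anc_tree_of_desc_tree; exact VT|]. intros Hanc.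
  apply (induced_tree_ext (D := converse D) (S := anc (converse D) u));
    [apply anc_converse | apply uedge_converse |].
  apply anc_tree_of_desc_tree; [apply vertex_transitive_converse; exact VT|].
  apply (induced_tree_ext (D := D) (S := anc D u)); [| |exact Hanc].
  - intros v. symmetry. apply desc_converse.
  - intros x y. symmetry. apply uedge_converse.
Qed.
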